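(* Let $\Sigma$ be a finite alphabet, $z_1,\dots,z_n\in\Sigma$, and $L_z=\Sigma^*z_1\Sigma^*z_2\Sigma^*\cdots\Sigma^*z_n\Sigma^*$. There exists an end-decisive MM-QFA that accepts $L_z$ with bounded positive one-sided error.
   Context: A measure-many quantum finite automaton (MM-QFA) over $\Sigma$ is a tuple $(Q,\Sigma,\{U_\sigma\}_{\sigma\in\Sigma\cup\{\$\}},q_0,Q_{acc},Q_{rej})$ with $Q$ finite indexing an orthonormal basis of $\mathbb{C}^Q$, end-marker $\$\notin\Sigma$, unitary $U_\sigma$, initial state $q_0$, and $Q$ partitioned into $Q_{acc},Q_{rej},Q_{non}$ with orthogonal projections $P_{acc},P_{rej},P_{non}$ onto the corresponding spans. On input $x\in\Sigma^*$ it processes the symbols of $x\$$ maintaining $(\psi,p_{acc},p_{rej})$, initially $(|q_0\rangle,0,0)$; on reading $\sigma$: $\psi'=U_\sigma\psi$, $p_{acc}\mathrel{+}=\|P_{acc}\psi'\|^2$, $p_{rej}\mathrel{+}=\|P_{rej}\psi'\|^2$, $\psi\leftarrow P_{non}\psi'$; the acceptance probability $p_M(x)$ is the final $p_{acc}$. The MM-QFA is end-decisive if, for every input, $P_{acc}\psi'=0$ after reading every symbol other than the end-marker (i.e. it can be observed in an accepting state only when $\$$ is read). It accepts $L$ with bounded positive one-sided error if there is $c>0$ with $p_M(x)>c$ for all $x\in L$ and $p_M(x)=0$ for all $x\notin L$. *)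

From mathcomp Require Import all_boot all_algebra.
From mathcomp Require Import reals.
From mathcomp.real_closed Require Export complex.
Set Implicit Arguments. Unset Strict Implicit. Unset Printing Implicit Defensive.
Import GRing.Theory Num.Theory.
Local Open Scope ring_scope.

(* States are 'I_nQ (indexing the orthonormal basis of C^nQ); the input
   symbols are [Some s] for s : Sigma and the end-marker $ is [None]. *)
Record mmqfa (C : numClosedFieldType) (Sigma : finType) := MMQFA {
  nQ : nat;
  U : option Sigma -> 'M[C]_nQ;
  q0 : 'I_nQ;
  Qacc : {set 'I_nQ};
  Qrej : {set 'I_nQ}
}.

Section MMQFA.
Variables (C : numClosedFieldType) (Sigma : finType).

Definition adjmx n (A : 'M[C]_n) : 'M[C]_n := (map_mx Num.conj A)^T.
Definition unitarymx n (A : 'M[C]_n) : Prop := A *m adjmx A = 1%:M.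

Definition projS n (S : {set 'I_n}) (v : 'cV[C]_n) : 'cV[C]_n :=
  \col_i (if i \in S then v i 0 else 0).
Definition sqnorm n (v : 'cV[C]_n) : C := \sum_i `|v i 0| ^+ 2.

Variable M : mmqfa C Sigma.

Definition Qnon : {set 'I_(nQ M)} := ~: (Qacc M :|: Qrej M).

Definition mmqfa_wf : Prop :=
  (forall s, unitarymx (U M s)) /\ [disjoint Qacc M & Qrej M].

Definition init_vec : 'cV[C]_(nQ M) := \col_i ((i == q0 M)%:R).

(* configuration (psi, p_acc, p_rej) *)
Definition step (st : 'cV[C]_(nQ M) * C * C) (s : option Sigma) :=
  let psi' := U M s *m st.1.1 in
  (projS Qnon psi', st.1.2 + sqnorm (projS (Qacc M) psi'),
   st.2 + sqnorm (projS (Qrej M) psi')).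

Definition run (w : seq (option Sigma)) := foldl step (init_vec, 0, 0) w.

Definition accept_prob (x : seq Sigma) : C :=
  (run (map Some x ++ [:: None])).1.2.

(* accepting states can be observed only when $ is read *)
Definition end_decisive : Prop :=
  forall (x : seq Sigma) (s : Sigma),
    projS (Qacc M) (U M (Some s) *m (run (map Some x)).1.1) = 0.

Definition accepts_bounded_positive_one_sided (L : seq Sigma -> Prop) : Prop :=
  exists c : C, 0 < c /\
    forall x : seq Sigma, (L x -> c < accept_prob x) /\ (~ L x -> accept_prob x = 0).

End MMQFA.

Definition Lz (Sigma : finType) (z : seq Sigma) (x : seq Sigma) : Prop :=
  subseq z x.

From Pilot Require Import Defs.
From mathcomp Require Import all_boot all_order all_algebra.
From mathcomp Require Import reals.
From mathcomp.real_closed Require Import complex.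
From mathcomp Require Import zify ring.
From Stdlib Require Import FunctionalExtensionality.
Import Order.TTheory GRing.Theory Num.Theory.
Set Implicit Arguments. Unset Strict Implicit. Unset Printing Implicit Defensive.
Local Open Scope ring_scope.

(* The automaton stores a real amplitude vector g in its non-halting states
   0..n, g_i standing for "i letters of z matched".  Reading a letter s, it
   applies, for every position j with z_j = s and largest j first, a
   reflection that replaces g_j and g_{j+1} by their mean and throws the
   difference into two fresh rejecting states.  If k is the length of the
   greedy match of z in the input read so far, g stays nonincreasing, vanishes
   beyond k, and g_k >= 2^-k: extending the match halves g_k into g_{k+1}, and
   the other averagings can only raise g_k because g is nonincreasing.  The
   end-marker swaps state n with the accepting state, so p_M(x) = |g_n|^2,
   which is 0 off L_z and at least 4^-n on L_z. *)

Section Matrices.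
Variables (C : numClosedFieldType) (m : nat).
Implicit Types (A B : 'M[C]_m) (u : 'cV[C]_m).

Lemma unitarymx1 : Defs.unitarymx (1%:M : 'M[C]_m).
Proof. by rewrite /Defs.unitarymx /adjmx map_mx1 trmx1 mulmx1. Qed.

Lemma unitarymx_mul A B :
  Defs.unitarymx A -> Defs.unitarymx B -> Defs.unitarymx (A *m B).
Proof.
rewrite /Defs.unitarymx /adjmx => UA UB.
by rewrite map_mxM trmx_mul mulmxA -(mulmxA A) UB mulmx1 UA.
Qed.

Lemma sqnorm0 : sqnorm (0 : 'cV[C]_m) = 0.
Proof. by rewrite /sqnorm big1 // => i _; rewrite mxE normr0 expr0n. Qed.

Definition householder u (c : C) : 'M[C]_m := 1%:M - c *: (u *m u^T).

Lemma adjmx_householder u c :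
  map_mx Num.conj u = u -> c^* = c -> adjmx (householder u c) = householder u c.
Proof.
move=> u_real c_real; rewrite /adjmx /householder map_mxB map_mx1 map_mxZ map_mxM.
by rewrite -map_trmx /= u_real c_real linearB /= trmx1 linearZ /= trmx_mul trmxK.
Qed.

Lemma householder_unitary u c k :
  map_mx Num.conj u = u -> c^* = c -> u^T *m u = k%:M -> c * k = 2 ->
  Defs.unitarymx (householder u c).
Proof.
move=> u_real c_real uTu ck2; rewrite /Defs.unitarymx adjmx_householder // /householder.
rewrite mulmxBl mul1mx mulmxBr mulmx1 -scalemxAl -scalemxAr mulmxA -(mulmxA u) uTu.
rewrite mul_mx_scalar -scalemxAl !scalerA ck2 -[2]/(1 + 1) mulrDr mulr1 scalerDl.
by rewrite opprB addrK subrK.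
Qed.

End Matrices.

Section Averaging.
Variable F : numFieldType.
Implicit Types (g : nat -> F) (i j k : nat) (l : seq nat).

Definition avg j g : nat -> F :=
  fun i => if (i == j) || (i == j.+1) then (g j.+1 + g j) / 2 else g i.

Definition noninc g := forall i, g i.+1 <= g i.

Definition vanishes_above k g := forall i, (k < i)%N -> g i = 0.

Lemma avg_noninc j g : noninc g -> noninc (avg j g).
Proof.
move=> ng i; have [mid_ge mid_le] := midf_le (ng j); rewrite /avg eqSS.
have [->|ij] := eqVneq i j; first by rewrite orbT.
have [->|ij1] := eqVneq i j.+1.
  by rewrite orbT (_ : j.+2 == j = false) ?orbF; [exact: le_trans (ng _) mid_ge | lia].
rewrite orbF; have [ij2|_] := eqVneq i.+1 j; last exact: ng.
by subst j; exact: le_trans mid_le (ng i).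
Qed.

Lemma avg_vanishes_above k j g :
  j != k -> vanishes_above k g -> vanishes_above k (avg j g).
Proof.
move=> /eqP jk vg i ki; rewrite /avg.
case: ifP => [ij|_]; last exact: vg.
have kj : (k < j)%N by case/orP: ij => /eqP ij; lia.
by rewrite (vg _ kj) (vg _ (leqW kj)) addr0 mul0r.
Qed.

Lemma avg_ge k j g : j != k -> noninc g -> g k <= avg j g k.
Proof.
move=> jk ng; rewrite /avg eq_sym (negbTE jk) /=.
by case: eqP => // ->; have [] := midf_le (ng j).
Qed.

Lemma avg_id k j g : (k < j)%N -> vanishes_above k g -> avg j g = g.
Proof.
move=> kj vg; apply: functional_extensionality => i; rewrite /avg.
by case: ifP => // /orP[]/eqP ->; rewrite (vg j kj) (vg j.+1 (leqW kj)) addr0 mul0r.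
Qed.

Lemma avg_shift k g : vanishes_above k g ->
  vanishes_above k.+1 (avg k g) /\ avg k g k.+1 = g k / 2.
Proof.
move=> vg; rewrite /avg eqxx orbT vg // add0r; split=> // i ki.
have [ik ik1] : i != k /\ i != k.+1 by split; apply/eqP; lia.
by rewrite (negbTE ik) (negbTE ik1) (vg _ (ltnW ki)).
Qed.

Lemma foldr_avg_noninc l g : noninc g -> noninc (foldr avg g l).
Proof. by elim: l => //= j l IH ng; apply/avg_noninc/IH. Qed.

Lemma foldr_avg_vanishes_above k l g :
  k \notin l -> vanishes_above k g -> vanishes_above k (foldr avg g l).
Proof.
elim: l => //= j l IH; rewrite inE negb_or eq_sym => /andP[jk kl] vg.
exact/avg_vanishes_above/IH.
Qed.

Lemma foldr_avg_ge k l g : k \notin l -> noninc g -> g k <= foldr avg g l k.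
Proof.
elim: l => //= j l IH; rewrite inE negb_or eq_sym => /andP[jk kl] ng.
exact: le_trans (IH kl ng) (avg_ge jk (foldr_avg_noninc l ng)).
Qed.

Lemma foldr_avg_id k l g :
  {in l, forall j, (k < j)%N} -> vanishes_above k g -> foldr avg g l = g.
Proof.
elim: l => //= j l IH kl vg.
rewrite IH => [|j' j'l|//]; last by apply: kl; rewrite inE j'l orbT.
by apply: avg_id vg; apply: kl; rewrite mem_head.
Qed.

End Averaging.

Section Amplitudes.
Variables (F : numFieldType) (Sigma : eqType) (z : seq Sigma).
Local Notation n := (size z).
Implicit Types (g : nat -> F) (k : nat) (s : Sigma) (x : seq Sigma).

Definition next_match k s := if onth z k == Some s then k.+1 else k.

Definition matched x := foldl next_match 0 x.

Lemma subseq_drop_next_match k x :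
  (k <= n)%N -> subseq (drop k z) x = (foldl next_match k x == n).
Proof.
elim: x k => [|y x IH] k kn /=.
  by rewrite -size_eq0 size_drop subn_eq0 eqn_leq kn.
case zk: (onth z k) => [c|].
  have kn' : (k < n)%N by rewrite -onthTE zk.
  have dropk : drop k z = c :: drop k.+1 z.
    by rewrite (drop_nth c kn') (onth_nth c c z k zk).
  have -> : next_match k y = if c == y then k.+1 else k.
    by rewrite /next_match zk (inj_eq (@Some_inj _)).
  by rewrite dropk /=; case: ifP => _; rewrite -?dropk IH.
have : ~~ onth z k by rewrite zk.
rewrite onthNE => nk; have kn_eq : k = n by lia.
have -> : next_match k y = k by rewrite /next_match zk.
by rewrite kn_eq drop_size -IH // drop_size sub0seq.
Qed.

Lemma subseq_matched x : subseq z x = (matched x == n).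
Proof. by rewrite -subseq_drop_next_match ?drop0. Qed.

Definition positions s := [seq j <- iota 0 n | onth z j == Some s].

Lemma positions_uniq s : uniq (positions s).
Proof. by rewrite filter_uniq // iota_uniq. Qed.

Lemma positions_lt s : {in positions s, forall j, (j < n)%N}.
Proof. by move=> j; rewrite mem_filter mem_iota => /andP[_ /andP[]]. Qed.

Lemma positions_split k s : onth z k = Some s ->
  positions s = [seq j <- iota 0 k | onth z j == Some s] ++
                k :: [seq j <- iota k.+1 (n - k.+1) | onth z j == Some s].
Proof.
move=> zk; have kn : (k < n)%N by rewrite -onthTE zk.
rewrite /positions; have -> : iota 0 n = iota 0 k ++ k :: iota k.+1 (n - k.+1).
  by rewrite -[in LHS](subnKC (ltnW kn)) iotaD add0n -(subnSK kn).
by rewrite filter_cat /= zk eqxx.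
Qed.

Definition read_amp g s := foldr (@avg F) g (positions s).

Definition amp x := foldl read_amp (fun i => (i == 0)%:R) x.

Definition amp_inv k g :=
  [/\ (k <= n)%N, noninc g, vanishes_above k g & (2^-1) ^+ k <= g k].

Lemma read_amp_inv k g s : amp_inv k g -> amp_inv (next_match k s) (read_amp g s).
Proof.
move=> [kn ng vg gk]; rewrite /next_match /read_amp.
case: eqP => [zk|zk].
  have kn' : (k < n)%N by rewrite -onthTE zk.
  rewrite (positions_split zk) foldr_cat /= (foldr_avg_id _ vg); last first.
    by move=> j; rewrite mem_filter mem_iota => /andP[_ /andP[]].
  have [vg' gk'] := avg_shift vg.
  have kpre : k.+1 \notin [seq j <- iota 0 k | onth z j == Some s].
    by rewrite mem_filter mem_iota ltnNge leqnSn !andbF.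
  split=> //; first exact/foldr_avg_noninc/avg_noninc.
    exact: foldr_avg_vanishes_above.
  apply: le_trans (foldr_avg_ge kpre (avg_noninc k ng)).
  by rewrite gk' exprSr ler_wpM2r // invr_ge0 ler0n.
have kpos : k \notin positions s by rewrite mem_filter; apply/nandP; left; exact/eqP.
split=> //; first exact: foldr_avg_noninc.
  exact: foldr_avg_vanishes_above.
exact: le_trans gk (foldr_avg_ge kpos ng).
Qed.

Lemma foldl_read_amp_inv k g x :
  amp_inv k g -> amp_inv (foldl next_match k x) (foldl read_amp g x).
Proof. by elim: x k g => //= s x IH k g /read_amp_inv/IH. Qed.

Lemma amp_inv_matched x : amp_inv (matched x) (amp x).
Proof. by apply: foldl_read_amp_inv; split=> [||[]|] //= i; rewrite ler0n. Qed.

Lemma amp_subseq x : subseq z x -> (2^-1) ^+ n <= amp x n.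
Proof.
rewrite subseq_matched => /eqP match_n.
by have [_ _ _] := amp_inv_matched x; rewrite match_n.
Qed.

Lemma amp_not_subseq x : ~~ subseq z x -> amp x n = 0.
Proof.
rewrite subseq_matched => match_n; have [mn _ vx _] := amp_inv_matched x.
by apply: vx; rewrite ltn_neqAle match_n.
Qed.

End Amplitudes.

Ltac decide_nat_eqs := repeat match goal with
  | |- context [@eq_op _ ?a ?b] =>
      let E := fresh in
      first [ have E : (a == b) = true by apply/eqP; lia
            | have E : (a == b) = false by apply/eqP; lia ];
      rewrite E; clear E
  end.

Section Machine.
Variables (C : numClosedFieldType) (Sigma : finType) (z : seq Sigma).
Local Notation n := (size z).
Local Notation read_amp := (@read_amp C Sigma z).
Local Notation amp := (@amp C Sigma z).
Implicit Types (f g u : nat -> C) (i j : nat).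

(* State i <= n is non-halting, states n+1+j and 2n+1+j are the rejecting
   garbage states of position j < n, and 3n+1 is the accepting state. *)
Definition nstates := (3 * n).+2.
Definition acc_state := (3 * n).+1.

Definition vec f : 'cV[C]_nstates := \col_(i < nstates) f i.
Definition emb g := vec (fun i => if (i <= n)%N then g i else 0).

Definition delta (a i : nat) : C := (i == a)%:R.
Definition mix_dir j i :=
  delta j i - delta j.+1 i - delta (n.+1 + j) i + delta ((2 * n).+1 + j) i.
Definition accept_dir i := delta n i - delta acc_state i.

(* [mix_dir j] has squared norm 4, so [mix_mx j] is a reflection. *)
Definition mix_mx j := householder (vec (mix_dir j)) 2^-1.
Definition mix_all (l : seq nat) := foldr (fun j A => mix_mx j *m A) 1%:M l.
Definition accept_mx := householder (vec accept_dir) 1.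
Definition subseq_trans (o : option Sigma) :=
  if o is Some s then mix_all (positions z s) else accept_mx.

Definition acc_states := [set i : 'I_nstates | val i == acc_state].
Definition rej_states := [set i : 'I_nstates | (n < i < acc_state)%N].

Definition subseq_qfa : mmqfa C Sigma :=
  MMQFA subseq_trans ord0 acc_states rej_states.

Lemma sum_delta a f : (a < nstates)%N -> \sum_(i < nstates) delta a i * f i = f a.
Proof.
move=> an; rewrite (bigD1 (Ordinal an)) //= /delta eqxx mul1r big1 ?addr0 // => i.
by rewrite -val_eqE => /negbTE /= ->; rewrite mul0r.
Qed.

Lemma sum_mix_dir j f : (j < n)%N ->
  \sum_(i < nstates) mix_dir j i * f i =
  f j - f j.+1 - f (n.+1 + j) + f ((2 * n).+1 + j).
Proof.
move=> jn; under eq_bigr do rewrite /mix_dir !(mulrDl, mulNr).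
by rewrite !big_split /= !sumrN !sum_delta // /nstates; lia.
Qed.

Lemma sum_accept_dir f : \sum_(i < nstates) accept_dir i * f i = f n - f acc_state.
Proof.
under eq_bigr do rewrite /accept_dir !(mulrDl, mulNr).
by rewrite !big_split /= !sumrN !sum_delta // /nstates /acc_state; lia.
Qed.

Lemma householder_vec u f c : householder (vec u) c *m vec f =
  vec (fun i => f i - c * (u i * \sum_(k < nstates) u k * f k)).
Proof.
rewrite /householder mulmxBl mul1mx -scalemxAl -mulmxA; apply/matrixP => i j.
rewrite (ord1 j) !mxE big_ord1 !mxE; congr (_ - _ * (_ * _)).
by apply: eq_bigr => k _; rewrite !mxE.
Qed.

Lemma vec_real u : (forall i, (u i)^* = u i) -> map_mx Num.conj (vec u) = vec u.
Proof. by move=> u_real; apply/matrixP => i j; rewrite !mxE u_real. Qed.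

Lemma trmx_vec_mul u : (vec u)^T *m vec u = (\sum_(k < nstates) u k * u k)%:M.
Proof.
apply/matrixP => i j; rewrite (ord1 i) (ord1 j) !mxE /= mulr1n.
by apply: eq_bigr => k _; rewrite !mxE.
Qed.

Lemma mix_mx_unitary j : (j < n)%N -> Defs.unitarymx (mix_mx j).
Proof.
move=> jn; apply: (householder_unitary (k := 4)).
- by apply: vec_real => i; rewrite /mix_dir /delta !(rmorphD, rmorphN) /= !conjC_nat.
- by rewrite fmorphV /= conjC_nat.
- rewrite trmx_vec_mul sum_mix_dir // /mix_dir /delta; decide_nat_eqs.
  by congr (_%:M) => /=; ring.
- by field.
Qed.

Lemma accept_mx_unitary : Defs.unitarymx accept_mx.
Proof.
apply: (householder_unitary (k := 2)); rewrite ?conjC1 ?mul1r //.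
- by apply: vec_real => i; rewrite /accept_dir /delta rmorphB /= !conjC_nat.
- rewrite trmx_vec_mul sum_accept_dir /accept_dir /delta /acc_state; decide_nat_eqs.
  by congr (_%:M) => /=; ring.
Qed.

Lemma subseq_qfa_wf : mmqfa_wf subseq_qfa.
Proof.
split; last first.
  apply/pred0P => i /=; rewrite !inE; apply/negbTE/negP => /andP[/eqP -> /andP[_]].
  by rewrite ltnn.
case=> [s|] /=; last exact: accept_mx_unitary.
move: (@positions_lt _ z s); rewrite /mix_all.
elim: (positions z s) => [|j l IH] ln /=; first exact: unitarymx1.
apply: unitarymx_mul; first by apply/mix_mx_unitary/ln; rewrite mem_head.
by apply: IH => j' j'l; apply: ln; rewrite inE j'l orbT.
Qed.

Lemma mix_mx_vec j f : (j < n)%N -> f (n.+1 + j) = 0 -> f ((2 * n).+1 + j) = 0 ->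
  mix_mx j *m vec f = vec (fun i => f i - 2^-1 * (mix_dir j i * (f j - f j.+1))).
Proof.
by move=> jn f1 f2; rewrite householder_vec sum_mix_dir // f1 f2 subr0 addr0.
Qed.

Lemma mix_all_emb l g : uniq l -> {in l, forall j, (j < n)%N} ->
  exists f, [/\ mix_all l *m emb g = vec f,
    forall i, (i <= n)%N -> f i = foldr (@avg C) g l i,
    f acc_state = 0 &
    forall j, (j < n)%N -> j \notin l -> f (n.+1 + j) = 0 /\ f ((2 * n).+1 + j) = 0].
Proof.
elim: l => [|j l IH] /= => [_ _|/andP[jl ul] ln].
  exists (fun i => if (i <= n)%N then g i else 0); rewrite mul1mx.
  split=> [|i ->||j' _ _] //; first by rewrite ifN // -ltnNge /acc_state; lia.
  by rewrite !ifN // -ltnNge; lia.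
have jn : (j < n)%N by apply: ln; rewrite mem_head.
have [|f [fE fl facc fslots]] := IH ul.
  by move=> j' j'l; apply: ln; rewrite inE j'l orbT.
have [fj1 fj2] := fslots j jn jl.
eexists; split; first by rewrite -mulmxA fE mix_mx_vec.
- move=> i ni; rewrite /avg -!fl //; last lia.
  rewrite /mix_dir /delta.
  case: (i =P j) => [->|ij]; decide_nat_eqs => /=; first by field.
  case: (i =P j.+1) => [->|ij1]; decide_nat_eqs => /=; first by field.
  by decide_nat_eqs => /=; ring.
- by rewrite /= facc /mix_dir /delta /acc_state; decide_nat_eqs => /=; ring.
- move=> j' j'n; rewrite inE negb_or => /andP[/eqP jj' j'l].
  have [g1 g2] := fslots j' j'n j'l.
  by rewrite g1 g2 /mix_dir /delta; split; decide_nat_eqs => /=; ring.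
Qed.

Lemma mem_Qnon (i : 'I_nstates) : (i \in Qnon subseq_qfa) = (i <= n)%N.
Proof.
move: (ltn_ord i); rewrite !inE /= /nstates /acc_state => ilt.
by apply/idP/idP; lia.
Qed.

Lemma projS_Qnon_vec f : projS (Qnon subseq_qfa) (vec f) = emb f.
Proof. by apply/matrixP => i k; rewrite !mxE mem_Qnon. Qed.

Lemma projS_acc_vec f :
  projS acc_states (vec f) = vec (fun i => if i == acc_state then f i else 0).
Proof. by apply/matrixP => i k; rewrite !mxE inE. Qed.

Lemma read_letter_emb s g :
  projS (Qnon subseq_qfa) (mix_all (positions z s) *m emb g) = emb (read_amp g s) /\
  projS acc_states (mix_all (positions z s) *m emb g) = 0.
Proof.
have [f [fE fl facc _]] := mix_all_emb g (positions_uniq z s) (@positions_lt _ z s).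
rewrite fE projS_Qnon_vec projS_acc_vec; split.
  by apply/matrixP => i k; rewrite !mxE; case: ifP => // /fl.
by apply/matrixP => i k; rewrite !mxE; case: eqP => // ->.
Qed.

Lemma sqnorm_projS_acc f : sqnorm (projS acc_states (vec f)) = `|f acc_state| ^+ 2.
Proof.
have accn : (acc_state < nstates)%N by [].
rewrite /sqnorm (bigD1 (Ordinal accn)) //= !mxE inE eqxx big1 ?addr0 // => i.
by rewrite -val_eqE !mxE inE => /negbTE /= ->; rewrite normr0 expr0n.
Qed.

Lemma run_subseq_qfa x : (run subseq_qfa (map Some x)).1 = (emb (amp x), 0).
Proof.
elim/last_ind: x => [|x s IH].
  congr (_, _); apply/matrixP => i k; rewrite !mxE -val_eqE /=.
  by case: ifP => // /negbT; rewrite -ltnNge; case: (val i).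
rewrite /run map_rcons foldl_rcons -/(run _ _).
case: (run _ _) IH => [[psi pacc] prej] /= [-> ->].
have [-> acc0] := read_letter_emb s (amp x).
by rewrite acc0 sqnorm0 addr0 [in RHS]/amp foldl_rcons.
Qed.

Lemma accept_prob_subseq_qfa x : accept_prob subseq_qfa x = `|amp x n| ^+ 2.
Proof.
rewrite /accept_prob /run foldl_cat -/(run _ _) /=.
case: (run _ _) (run_subseq_qfa x) => [[psi pacc] prej] /= [-> ->].
rewrite add0r householder_vec.
rewrite (sum_accept_dir (fun k => if (k <= n)%N then amp x k else 0)) /=.
rewrite sqnorm_projS_acc.
rewrite /accept_dir /delta /acc_state; decide_nat_eqs => /=.
have lt3n : (3 * n < n)%N = false by apply/negbTE; rewrite -leqNgt; lia.
by rewrite leqnn lt3n; congr (`|_| ^+ _); ring.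
Qed.

Lemma subseq_qfa_end_decisive : end_decisive subseq_qfa.
Proof.
move=> x s; case: (run _ _) (run_subseq_qfa x) => [[psi pacc] prej] /= [-> _].
by have [_ ->] := read_letter_emb s (amp x).
Qed.

Lemma accept_prob_subseq x :
  subseq z x -> ((2^-1) ^+ n) ^+ 2 <= accept_prob subseq_qfa x.
Proof.
move=> zx; have amp_ge := amp_subseq C zx.
have pos : 0 <= (2^-1 : C) ^+ n by rewrite exprn_ge0 // invr_ge0 ler0n.
rewrite accept_prob_subseq_qfa ger0_norm ?(le_trans pos) //.
by rewrite !expr2 ler_pM.
Qed.

Lemma accept_prob_not_subseq x : ~~ subseq z x -> accept_prob subseq_qfa x = 0.
Proof.
by move/(amp_not_subseq C); rewrite accept_prob_subseq_qfa => ->; rewrite normr0 expr0n.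
Qed.

End Machine.

Theorem theorem4p7 (R : realType) (Sigma : finType) (z : seq Sigma) :
  exists M : mmqfa R[i] Sigma,
    mmqfa_wf M /\ end_decisive M /\ accepts_bounded_positive_one_sided M (Lz z).
Proof.
exists (subseq_qfa R[i] z); split; first exact: subseq_qfa_wf.
split; first exact: subseq_qfa_end_decisive.
set t : R[i] := ((2^-1) ^+ size z) ^+ 2.
have t_gt0 : 0 < t by rewrite !exprn_gt0 // invr_gt0 ltr0n.
exists (t / 2); split=> [|x]; first by rewrite divr_gt0.
split=> [zx|/negP/accept_prob_not_subseq //].
apply: lt_le_trans (accept_prob_subseq R[i] zx).
by rewrite ltr_pdivrMr // ltr_pMr // ltr1n.
Qed.
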